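(* Let $(H,\Delta,\Delta')$ be a Hopf brace over a field $k$, with first antipode $S$. Then for every $h\in H$, $$S(h_1)_{1'}\,h_2\otimes S(h_1)_{2'}=S(h_1)\,h_{21'}\otimes S(h_{22'}).$$
   Context: All objects are over a field $k$. A Hopf brace $(H,\Delta,\Delta')$ consists of an algebra $(H,m,1)$ together with two Hopf algebra structures $(H,m,1,\Delta,\varepsilon,S)$ and $(H,m,1,\Delta',\epsilon,T)$ on the same algebra, satisfying for all $h\in H$ $$h_{1'}\otimes h_{2'1}\otimes h_{2'2}=h_{11'}\,S(h_2)\,h_{31'}\otimes h_{12'}\otimes h_{32'}.$$ Sweedler notation: $\Delta(h)=h_1\otimes h_2$, $\Delta'(h)=h_{1'}\otimes h_{2'}$ (summation omitted); iterated indices such as $h_{21'}\otimes h_{22'}$ mean: apply $\Delta$ to $h$, then $\Delta'$ to the second tensor factor $h_2$; $S(h_1)_{1'}\otimes S(h_1)_{2'}$ denotes $\Delta'(S(h_1))$. *)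

From HB Require Import structures.
From mathcomp Require Import all_boot all_order all_algebra.
Set Implicit Arguments. Unset Strict Implicit. Unset Printing Implicit Defensive.
Import GRing.Theory.
Local Open Scope ring_scope.

(* Elements of H (x) H (resp. H (x) H (x) H) are represented by finite
   formal sums of pure tensors, i.e. sequences of pairs (triples).
   Two such representatives denote the same element of the tensor product
   iff they agree on every bilinear (trilinear) form H x H -> k
   (over a field, linear functionals separate points of H (x) H). *)
Section Tensors.
Variables (k : fieldType) (H : algType k).

Definition bilinear_form (B : H -> H -> k) : Prop :=
  forall (a : k) (x y z : H),
    B (a *: x + y) z = a * B x z + B y z /\
    B z (a *: x + y) = a * B z x + B z y.

Definition trilinear_form (B : H -> H -> H -> k) : Prop :=
  forall (a : k) (x y u v : H),
    [/\ B (a *: x + y) u v = a * B x u v + B y u v,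
        B u (a *: x + y) v = a * B u x v + B u y v &
        B u v (a *: x + y) = a * B u v x + B u v y].

Definition teq2 (s t : seq (H * H)) : Prop :=
  forall B, bilinear_form B ->
    \sum_(p <- s) B p.1 p.2 = \sum_(p <- t) B p.1 p.2.

Definition teq3 (s t : seq (H * H * H)) : Prop :=
  forall B, trilinear_form B ->
    \sum_(p <- s) B p.1.1 p.1.2 p.2 = \sum_(p <- t) B p.1.1 p.1.2 p.2.

(* (H, m, 1, cop, cou, anti) is a Hopf algebra over k, with cop h
   representing Delta(h) = sum h_1 (x) h_2. *)
Definition is_hopf (cop : H -> seq (H * H)) (cou : H -> k) (anti : H -> H)
  : Prop :=
      (forall (a : k) (x y : H),
         teq2 (cop (a *: x + y)) ([seq (a *: p.1, p.2) | p <- cop x] ++ cop y)) /\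
      (forall h : H,
         teq3 [seq (q.1, q.2, p.2) | p <- cop h, q <- cop p.1]
              [seq (p.1, q.1, q.2) | p <- cop h, q <- cop p.2]) /\
      (forall (a : k) (x y : H), cou (a *: x + y) = a * cou x + cou y) /\
      (forall h : H, \sum_(p <- cop h) cou p.1 *: p.2 = h
                  /\ \sum_(p <- cop h) cou p.2 *: p.1 = h) /\
      (forall x y : H,
         teq2 (cop (x * y)) [seq (p.1 * q.1, p.2 * q.2) | p <- cop x, q <- cop y])
        /\ teq2 (cop 1) [:: (1, 1)] /\
      (forall x y : H, cou (x * y) = cou x * cou y) /\ cou 1 = 1 /\
      (forall (a : k) (x y : H), anti (a *: x + y) = a *: anti x + anti y)
      /\ (forall h : H, \sum_(p <- cop h) anti p.1 * p.2 = cou h *: 1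
                     /\ \sum_(p <- cop h) p.1 * anti p.2 = cou h *: 1).

(* Hopf brace compatibility:
   h_1' (x) h_2'1 (x) h_2'2 = h_11' S(h_2) h_31' (x) h_12' (x) h_32',
   where h_1 (x) h_2 (x) h_3 = (Delta (x) id) Delta h. *)
Definition brace_compat (cop cop' : H -> seq (H * H)) (anti : H -> H) : Prop :=
  forall h : H,
    teq3 [seq (p.1, q.1, q.2) | p <- cop' h, q <- cop p.2]
         (flatten [seq [seq (a.1 * anti r.2 * b.1, a.2, b.2)
                          | a <- cop' r.1, b <- cop' p.2]
                   | p <- cop h, r <- cop p.1]).

Definition is_hopf_brace (cop : H -> seq (H * H)) (cou : H -> k) (anti : H -> H)
  (cop' : H -> seq (H * H)) (cou' : H -> k) (anti' : H -> H) : Prop :=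
  [/\ is_hopf cop cou anti, is_hopf cop' cou' anti' & brace_compat cop cop' anti].

End Tensors.

From mathcomp Require Import all_boot all_algebra ring.
Set Implicit Arguments. Unset Strict Implicit. Unset Printing Implicit Defensive.
Import GRing.Theory.
Local Open Scope ring_scope.

(* Pairing the brace compatibility with G(u, v S(w)) and using eps' = eps gives
   x_{11'} S(x_2) x_{31'} (x) x_{12'} S(x_{32'}) = x (x) 1.  Substituting this for
   h_2 (x) 1 in S(h_1)_{1'} h_2 (x) S(h_1)_{2'}, coassociativity and multiplicativity
   of Delta' regroup the result as
   (S(h_1) h_2)_{1'} S(h_3) h_{41'} (x) (S(h_1) h_2)_{2'} S(h_{42'}),
   and the antipode axiom together with Delta'(1) = 1 (x) 1 collapses it to
   S(h_1) h_{21'} (x) S(h_{22'}).  The equality eps' = eps itself comes from pairing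
   the compatibility with eps' (x) eps (x) eps, which yields eps' o S = eps. *)

Section Multilinear.
Variables (k : fieldType) (H : algType k).
Implicit Types (f : H -> k) (g : H -> H) (B G : H -> H -> k).

Lemma scalarZ f a x : scalar f -> f (a *: x) = a * f x.
Proof. by move=> hf; rewrite (GRing.scalable_linear hf). Qed.

Lemma scalar_sum f I (r : seq I) (F : I -> H) :
  scalar f -> f (\sum_(i <- r) F i) = \sum_(i <- r) f (F i).
Proof.
move=> hf; have [f0 fD] := GRing.nmod_morphism_semilinear (GRing.semilinear_linear hf).
exact: (big_morph f fD f0).
Qed.

Lemma scalar_sumr I (r : seq I) (F : I -> H -> k) :
  (forall i, scalar (F i)) -> scalar (fun x => \sum_(i <- r) F i x).
Proof.
by move=> hF a x y; rewrite mulr_sumr -big_split; apply: eq_bigr => i _; rewrite hF.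
Qed.

Lemma scalar_mull f c : scalar f -> scalar (fun x => c * f x).
Proof. by move=> hf a x y; rewrite hf mulrDr mulrCA. Qed.

Lemma scalar_mulr f c : scalar f -> scalar (fun x => f x * c).
Proof. by move=> hf a x y; rewrite hf mulrDl mulrA. Qed.

Lemma scalar_comp f g : scalar f -> linear g -> scalar (fun x => f (g x)).
Proof. by move=> hf hg a x y; rewrite hg hf. Qed.

Lemma linear_mull (c : H) : linear (fun x => c * x).
Proof. by move=> a x y; rewrite mulrDr scalerAr. Qed.

Lemma linear_mulr (c : H) : linear (fun x => x * c).
Proof. by move=> a x y; rewrite mulrDl scalerAl. Qed.

Lemma linear_comp g1 g2 : linear g1 -> linear g2 -> linear (fun x => g1 (g2 x)).
Proof. by move=> h1 h2 a x y; rewrite h2 h1. Qed.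

Lemma bilinear_formP B :
  (forall y, scalar (B^~ y)) -> (forall x, scalar (B x)) -> bilinear_form B.
Proof. by move=> hl hr a x y z; split; [apply: hl | apply: hr]. Qed.

Lemma bilinear_form_scalarl B y : bilinear_form B -> scalar (B^~ y).
Proof. by move=> hB a x x'; case: (hB a x x' y). Qed.

Lemma bilinear_form_scalarr B x : bilinear_form B -> scalar (B x).
Proof. by move=> hB a y y'; case: (hB a y y' x). Qed.

Lemma bilinear_form_comp B g1 g2 : bilinear_form B -> linear g1 -> linear g2 ->
  bilinear_form (fun x y => B (g1 x) (g2 y)).
Proof.
move=> hB h1 h2; apply: bilinear_formP => z.
  exact: scalar_comp (bilinear_form_scalarl _ hB) h1.
exact: scalar_comp (bilinear_form_scalarr _ hB) h2.
Qed.

Lemma bilinear_form_sum I (r : seq I) (F : I -> H -> H -> k) :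
  (forall i, bilinear_form (F i)) -> bilinear_form (fun x y => \sum_(i <- r) F i x y).
Proof.
move=> hF; apply: bilinear_formP => z; apply: scalar_sumr => i.
  exact: bilinear_form_scalarl.
exact: bilinear_form_scalarr.
Qed.

Lemma trilinear_formP (F : H -> H -> H -> k) :
  (forall v w, scalar (fun u => F u v w)) -> (forall u, bilinear_form (F u)) ->
  trilinear_form F.
Proof.
move=> h1 h23 a x y u v; split; first exact: h1.
  exact: bilinear_form_scalarl.
exact: bilinear_form_scalarr.
Qed.

Lemma trilinear_form_comp_mul B g : bilinear_form B -> linear g ->
  trilinear_form (fun u v w => B (g u * v) w).
Proof.
move=> hB hg; apply: trilinear_formP => [v w|u].
  exact: scalar_comp (bilinear_form_scalarl _ hB) (linear_comp (linear_mulr _) hg).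
apply: bilinear_formP => z; last exact: bilinear_form_scalarr.
exact: scalar_comp (bilinear_form_scalarl _ hB) (linear_mull _).
Qed.

Definition lmul_form G (s t : H) x y := G (s * x) (t * y).

Lemma bilinear_lmul_form G s t : bilinear_form G -> bilinear_form (lmul_form G s t).
Proof. by move=> hG; apply: bilinear_form_comp; [|exact: linear_mull..]. Qed.

Lemma lmul_formM G s t s' t' :
  lmul_form (lmul_form G s t) s' t' =2 lmul_form G (s * s') (t * t').
Proof. by move=> x y; rewrite /lmul_form !mulrA. Qed.

Lemma lmul_form1 G : lmul_form G 1 1 =2 G.
Proof. by move=> x y; rewrite /lmul_form !mul1r. Qed.

Definition linear_coproduct (cop : H -> seq (H * H)) := forall a x y,
  teq2 (cop (a *: x + y)) ([seq (a *: p.1, p.2) | p <- cop x] ++ cop y).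

Lemma scalar_sum_coproduct cop B : linear_coproduct cop -> bilinear_form B ->
  scalar (fun x => \sum_(p <- cop x) B p.1 p.2).
Proof.
move=> copL hB a x y; rewrite (copL a x y B hB) big_cat big_map mulr_sumr.
congr (_ + _); apply: eq_bigr => p _.
by rewrite (scalarZ _ _ (bilinear_form_scalarl _ hB)).
Qed.

End Multilinear.

Section SweedlerSums.
Variables (k : fieldType) (H : algType k).
Variables (cop : H -> seq (H * H)) (cou : H -> k) (anti : H -> H).
Implicit Types (f : H -> k) (B : H -> H -> k) (F : H -> H -> H -> k).

Hypothesis counit : forall h,
  \sum_(p <- cop h) cou p.1 *: p.2 = h /\ \sum_(p <- cop h) cou p.2 *: p.1 = h.

Lemma sum_counitl f h : scalar f -> \sum_(p <- cop h) cou p.1 * f p.2 = f h.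
Proof.
move=> hf; rewrite -{2}(counit h).1 scalar_sum //.
by apply: eq_bigr => p _; rewrite scalarZ.
Qed.

Lemma sum_counitr f h : scalar f -> \sum_(p <- cop h) cou p.2 * f p.1 = f h.
Proof.
move=> hf; rewrite -{2}(counit h).2 scalar_sum //.
by apply: eq_bigr => p _; rewrite scalarZ.
Qed.

Hypothesis coassoc : forall h,
  teq3 [seq (q.1, q.2, p.2) | p <- cop h, q <- cop p.1]
       [seq (p.1, q.1, q.2) | p <- cop h, q <- cop p.2].

Lemma sum_coassoc F h : trilinear_form F ->
  \sum_(p <- cop h) \sum_(q <- cop p.1) F q.1 q.2 p.2 =
  \sum_(p <- cop h) \sum_(q <- cop p.2) F p.1 q.1 q.2.
Proof. by move=> hF; have := coassoc h hF; rewrite !big_allpairs_dep. Qed.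

Hypothesis antipode : forall h,
  \sum_(p <- cop h) anti p.1 * p.2 = cou h *: 1 /\
  \sum_(p <- cop h) p.1 * anti p.2 = cou h *: 1.

Lemma sum_antipodel f h : scalar f ->
  \sum_(p <- cop h) f (anti p.1 * p.2) = cou h * f 1.
Proof. by move=> hf; rewrite -scalar_sum // (antipode h).1 scalarZ. Qed.

Lemma sum_antipoder f h : scalar f ->
  \sum_(p <- cop h) f (p.1 * anti p.2) = cou h * f 1.
Proof. by move=> hf; rewrite -scalar_sum // (antipode h).2 scalarZ. Qed.

Hypothesis copM : forall x y,
  teq2 (cop (x * y)) [seq (p.1 * q.1, p.2 * q.2) | p <- cop x, q <- cop y].

Lemma sum_copM B x y : bilinear_form B ->
  \sum_(d <- cop (x * y)) B d.1 d.2 =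
  \sum_(p <- cop x) \sum_(q <- cop y) B (p.1 * q.1) (p.2 * q.2).
Proof. by move=> hB; rewrite (copM x y hB) big_allpairs_dep. Qed.

Hypothesis cop1 : teq2 (cop 1) [:: (1, 1)].

Lemma sum_cop1 B : bilinear_form B -> \sum_(d <- cop 1) B d.1 d.2 = B 1 1.
Proof. by move=> hB; rewrite (cop1 hB) big_seq1. Qed.

End SweedlerSums.

Section HopfBrace.
Variables (k : fieldType) (H : algType k).
Variables (cop : H -> seq (H * H)) (cou : H -> k) (S : H -> H).
Variables (cop' : H -> seq (H * H)) (cou' : H -> k).
Implicit Types (G : H -> H -> k).

Hypotheses (copL : linear_coproduct cop) (cop'L : linear_coproduct cop').
Hypotheses (couL : scalar cou) (cou'L : scalar cou') (SL : linear S).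
Hypothesis coassoc : forall h,
  teq3 [seq (q.1, q.2, p.2) | p <- cop h, q <- cop p.1]
       [seq (p.1, q.1, q.2) | p <- cop h, q <- cop p.2].
Hypothesis counit : forall h,
  \sum_(p <- cop h) cou p.1 *: p.2 = h /\ \sum_(p <- cop h) cou p.2 *: p.1 = h.
Hypothesis counit' : forall h,
  \sum_(p <- cop' h) cou' p.1 *: p.2 = h /\ \sum_(p <- cop' h) cou' p.2 *: p.1 = h.
Hypothesis antipode : forall h,
  \sum_(p <- cop h) S p.1 * p.2 = cou h *: 1 /\
  \sum_(p <- cop h) p.1 * S p.2 = cou h *: 1.
Hypothesis cop'M : forall x y,
  teq2 (cop' (x * y)) [seq (p.1 * q.1, p.2 * q.2) | p <- cop' x, q <- cop' y].
Hypothesis cop'1 : teq2 (cop' 1) [:: (1, 1)].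
Hypothesis cou'M : forall x y, cou' (x * y) = cou' x * cou' y.
Hypothesis cou'1 : cou' 1 = 1.
Hypothesis compat : brace_compat cop cop' S.

Lemma sum_compat (F : H -> H -> H -> k) h : trilinear_form F ->
  \sum_(p <- cop' h) \sum_(q <- cop p.2) F p.1 q.1 q.2 =
  \sum_(p <- cop h) \sum_(r <- cop p.1) \sum_(a <- cop' r.1) \sum_(b <- cop' p.2)
     F (a.1 * S r.2 * b.1) a.2 b.2.
Proof.
move=> hF; have := compat h hF.
rewrite big_allpairs_dep big_flatten /= big_allpairs_dep => ->.
by apply: eq_bigr => p _; apply: eq_bigr => r _; rewrite big_allpairs_dep.
Qed.

Lemma cou'_antipode h : cou' (S h) = cou h.
Proof.
have hF : trilinear_form (fun u v w => cou' u * cou v * cou w).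
  apply: trilinear_formP => [v w|u]; first exact/scalar_mulr/scalar_mulr.
  by apply: bilinear_formP => z; [apply/scalar_mulr/scalar_mull | apply: scalar_mull].
symmetry; transitivity
  (\sum_(p <- cop' h) \sum_(q <- cop p.2) cou' p.1 * cou q.1 * cou q.2).
  rewrite -[LHS](sum_counitl counit' _ couL); apply: eq_bigr => p _.
  by rewrite -(sum_counitl counit _ couL) mulr_sumr; apply: eq_bigr => q _; rewrite mulrA.
rewrite (sum_compat h hF); transitivity
  (\sum_(p <- cop h) \sum_(r <- cop p.1) cou r.1 * cou' (S r.2) * cou p.2).
  apply: eq_bigr => p _; apply: eq_bigr => r _.
  rewrite -(sum_counitl counit' _ couL) -[in RHS](sum_counitl counit' _ couL) !mulr_suml.
  apply: eq_bigr => a _; rewrite mulr_sumr; apply: eq_bigr => b _.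
  by rewrite !cou'M; ring.
rewrite -(sum_counitr counit h (scalar_comp cou'L SL)).
apply: eq_bigr => p _.
by rewrite -mulr_suml (sum_counitl counit _ (scalar_comp cou'L SL)) mulrC.
Qed.

Lemma cou'_cou h : cou' h = cou h.
Proof.
rewrite -{1}(counit h).1 scalar_sum //.
rewrite -[RHS]mulr1 -cou'1 -(sum_antipodel antipode _ cou'L).
by apply: eq_bigr => p _; rewrite scalarZ // cou'M cou'_antipode.
Qed.

Lemma compat_antipode G x : bilinear_form G ->
  \sum_(p <- cop x) \sum_(r <- cop p.1) \sum_(a <- cop' r.1) \sum_(b <- cop' p.2)
     G (a.1 * S r.2 * b.1) (a.2 * S b.2) = G x 1.
Proof.
move=> hG; have hF : trilinear_form (fun u v w => G u (v * S w)).
  apply: trilinear_formP => [v w|u]; first exact: bilinear_form_scalarl.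
  apply: bilinear_formP => z; apply: scalar_comp (bilinear_form_scalarr _ hG) _.
    exact: linear_mulr.
  exact: linear_comp (linear_mull _) SL.
rewrite -(sum_compat x hF) -[RHS](sum_counitr counit' x (bilinear_form_scalarl 1 hG)).
apply: eq_bigr => p _.
by rewrite (sum_antipoder antipode _ (bilinear_form_scalarr _ hG)) cou'_cou.
Qed.

(* [twist G v w] is G paired with S(v) w_{1'} (x) S(w_{2'}), and [ltwist G y v w]
   is G paired with y_{1'} S(v) w_{1'} (x) y_{2'} S(w_{2'}). *)
Definition twist G v w := \sum_(b <- cop' w) G (S v * b.1) (S b.2).

Definition ltwist G y v w := \sum_(a <- cop' y) twist (lmul_form G a.1 a.2) v w.

Definition ltwist_sum G y h := \sum_(p <- cop h) ltwist G y p.1 p.2.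

Lemma eq_twist G1 G2 : G1 =2 G2 -> twist G1 =2 twist G2.
Proof. by move=> eG v w; apply: eq_bigr => b _; apply: eG. Qed.

Lemma bilinear_twist G : bilinear_form G -> bilinear_form (twist G).
Proof.
move=> hG; apply: bilinear_formP => z.
  apply: scalar_sumr => b.
  exact: scalar_comp (bilinear_form_scalarl _ hG) (linear_comp (linear_mulr _) SL).
exact: scalar_sum_coproduct cop'L (bilinear_form_comp hG (linear_mull _) SL).
Qed.

Lemma bilinear_twist_lmul G v w :
  bilinear_form G -> bilinear_form (fun s t => twist (lmul_form G s t) v w).
Proof.
move=> hG; apply: bilinear_form_sum => b.
by apply: bilinear_form_comp; [|exact: linear_mulr..].
Qed.

Lemma scalar_ltwist G v w : bilinear_form G -> scalar (fun y => ltwist G y v w).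
Proof. by move=> hG; apply: scalar_sum_coproduct cop'L (bilinear_twist_lmul _ _ hG). Qed.

Lemma bilinear_ltwist G y : bilinear_form G -> bilinear_form (ltwist G y).
Proof.
by move=> hG; apply: bilinear_form_sum => a; apply/bilinear_twist/bilinear_lmul_form.
Qed.

Lemma trilinear_ltwist G : bilinear_form G -> trilinear_form (ltwist G).
Proof.
move=> hG.
by apply: trilinear_formP => *; [apply: scalar_ltwist | apply: bilinear_ltwist].
Qed.

Lemma bilinear_ltwist_sum G : bilinear_form G -> bilinear_form (ltwist_sum G).
Proof.
move=> hG; apply: bilinear_formP => z.
  by apply: scalar_sumr => p; apply: scalar_ltwist.
exact: scalar_sum_coproduct copL (bilinear_ltwist _ hG).
Qed.

Lemma sum_ltwist_sum G x : bilinear_form G ->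
  \sum_(p <- cop x) ltwist_sum G p.1 p.2 = G x 1.
Proof.
move=> hG; rewrite -(sum_coassoc coassoc _ (trilinear_ltwist hG)) -(compat_antipode x hG).
apply: eq_bigr => p _; apply: eq_bigr => r _; apply: eq_bigr => a _.
by apply: eq_bigr => b _; rewrite /lmul_form mulrA.
Qed.

Lemma ltwist_sumM G u v h : bilinear_form G ->
  \sum_(c <- cop' u) ltwist_sum (lmul_form G c.1 c.2) v h = ltwist_sum G (u * v) h.
Proof.
move=> hG; rewrite exchange_big; apply: eq_bigr => p _.
rewrite /ltwist (sum_copM cop'M _ _ (bilinear_twist_lmul _ _ hG)).
by apply: eq_bigr => c _; apply: eq_bigr => a _; apply/eq_twist/lmul_formM.
Qed.

Lemma ltwist_sum1 G h : bilinear_form G ->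
  ltwist_sum G 1 h = \sum_(p <- cop h) twist G p.1 p.2.
Proof.
move=> hG; apply: eq_bigr => p _.
rewrite /ltwist (sum_cop1 cop'1 (bilinear_twist_lmul _ _ hG)).
by apply: eq_twist; apply: lmul_form1.
Qed.

Lemma sum_cop'_antipode G h : bilinear_form G ->
  \sum_(p <- cop h) \sum_(c <- cop' (S p.1)) G (c.1 * p.2) c.2 =
  \sum_(p <- cop h) twist G p.1 p.2.
Proof.
move=> hG; have hL := bilinear_ltwist_sum hG.
transitivity (\sum_(p <- cop h) \sum_(q <- cop p.2) ltwist_sum G (S p.1 * q.1) q.2).
  apply: eq_bigr => p _; under [RHS]eq_bigr => q _ do rewrite -ltwist_sumM //.
  rewrite exchange_big; apply: eq_bigr => c _.
  rewrite sum_ltwist_sum; last exact: bilinear_lmul_form.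
  by rewrite /lmul_form mulr1.
have := sum_coassoc coassoc h (trilinear_form_comp_mul hL SL); rewrite /= => <-.
rewrite -ltwist_sum1 // -(sum_counitl counit h (bilinear_form_scalarr 1 hL)).
by apply: eq_bigr => p _; rewrite (sum_antipodel antipode _ (bilinear_form_scalarl _ hL)).
Qed.

End HopfBrace.

Theorem lemma2p4 (k : fieldType) (H : algType k)
  (cop : H -> seq (H * H)) (cou : H -> k) (S : H -> H)
  (cop' : H -> seq (H * H)) (cou' : H -> k) (T : H -> H) :
  is_hopf_brace cop cou S cop' cou' T ->
  forall h : H,
    teq2 [seq (a.1 * p.2, a.2) | p <- cop h, a <- cop' (S p.1)]
         [seq (S p.1 * b.1, S b.2) | p <- cop h, b <- cop' p.2].
Proof.
case=> [[copL [coassoc [couL [counit [_ [_ [_ [_ [SL antipode]]]]]]]]]].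
case=> [cop'L [_ [cou'L [counit' [cop'M [cop'1 [cou'M [cou'1 _]]]]]]]] compat h G hG.
rewrite !big_allpairs_dep.
exact: (sum_cop'_antipode copL cop'L couL cou'L SL coassoc counit counit' antipode
  cop'M cop'1 cou'M cou'1 compat).
Qed.
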